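(* Let $h(x)$ and $h'(x)$ be scattered polynomials in $\mathbb{F}_{q^n}[x]$ in standard form, both $\mathrm{GL}$-equivalent to a scattered polynomial $f(x)$. Then there exist $a,b\in\mathbb{F}_{q^n}^*$ such that $h'(x)=ah(bx)$ for all $x$, or $h'(x)=ah^{-1}(bx)$ for all $x$.
   Context: $q$ is a prime power, $n>1$. A $q$-polynomial $h(x)=\sum_{i=0}^{n-1}b_ix^{q^i}\in\mathbb{F}_{q^n}[x]$ is scattered if for all $y,z\in\mathbb{F}_{q^n}$, $zh(y)-yh(z)=0$ implies $y,z$ are $\mathbb{F}_q$-linearly dependent. $U_h=\{(x,h(x))\colon x\in\mathbb{F}_{q^n}\}$; two $q$-polynomials $f,g$ are $\mathrm{GL}$-equivalent if $U_fA=U_g$ for some $A\in\mathrm{GL}(2,q^n)$, where $A$ acts on row vectors by right multiplication. With $\Delta_h=\{(i-j)\bmod n\colon b_ib_j\neq0,\ i\neq j\}\cup\{n\}$ and $t_h=\gcd(\Delta_h)$, $h$ is in standard form if $t_h>1$. A scattered polynomial in standard form is a bijection of $\mathbb{F}_{q^n}$, and $h^{-1}$ denotes its inverse map (itself an $\mathbb{F}_q$-linear map of $\mathbb{F}_{q^n}$). *)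

From HB Require Import structures.
From mathcomp Require Import all_boot all_order all_algebra finfield.
Set Implicit Arguments. Unset Strict Implicit. Unset Printing Implicit Defensive.
Import GRing.Theory.
Local Open Scope ring_scope.

(* L plays the role of F_{q^n}; F_q is the subfield {c | c^q = c}. *)
Section QPoly.
Variables (L : finFieldType) (q n : nat).

Definition qlin (b : 'I_n -> L) (x : L) : L :=
  \sum_(i < n) b i * x ^+ (q ^ i).

Definition in_Fq (c : L) : bool := c ^+ q == c.

Definition Fq_dep (y z : L) : Prop :=
  exists c d : L, [/\ in_Fq c, in_Fq d, (c != 0) || (d != 0) & c * y + d * z = 0].

Definition scattered (b : 'I_n -> L) : Prop :=
  forall y z : L, z * qlin b y - y * qlin b z = 0 -> Fq_dep y z.

(* t_h = gcd (Delta_h), Delta_h = {(i-j) mod n | b_i b_j <> 0, i <> j} u {n} *)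
Definition t_of (b : 'I_n -> L) : nat :=
  gcdn (\big[gcdn/0%N]_(i < n) \big[gcdn/0%N]_(j < n | (i != j) && (b i * b j != 0))
          (((i + n) - j) %% n)%N) n.

Definition standard_form (b : 'I_n -> L) : bool := (1 < t_of b)%N.

Definition U_set (h : L -> L) : {set 'rV[L]_2} :=
  [set \row_(k < 2) (if k == 0 then x else h x) | x : L].

Definition GL_equiv (f g : L -> L) : Prop :=
  exists A : 'M[L]_2, A \in unitmx /\ [set u *m A | u in U_set f] = U_set g.

(* the inverse map of h (meaningful when h is a bijection) *)
Definition qinv (b : 'I_n -> L) (y : L) : L :=
  odflt 0 [pick x | qlin b x == y].
End QPoly.

(* If [U_h A = U_h'], conjugation by [A] maps the ring of matrices [M] with
   [U_h M <= U_h] into the corresponding ring for [h'].  A polynomial in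
   standard form satisfies [h (lam x) = lam^(q^k) h x] for some [lam] with
   [lam^(q^k) <> lam] (take [lam] generating F_(q^t)), i.e.
   [diag(lam, lam^(q^k))] lies in its ring.  For [n > 2] and [h'] scattered,
   every nonzero matrix in the ring of [h'] is invertible, since a singular one
   yields an additive map whose kernel and image are F_q-lines, forcing
   [q^n <= q^2].  By Wedderburn's little theorem that ring is then commutative,
   so the conjugate of [diag(lam, lam^(q^k))] commutes with [diag(mu, mu^(q^k'))]
   and is itself diagonal.  Hence [A] is diagonal or antidiagonal, which gives
   [h' = a h(b x)] or [h' = a h^-1(b x)].  For [n = 2] both polynomials are
   monomials [c x^q]. *)

From HB Require Import structures.
From mathcomp Require Import all_boot all_order all_algebra all_solvable finfield.
From mathcomp Require Import ring zify.
Set Implicit Arguments. Unset Strict Implicit. Unset Printing Implicit Defensive.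
Import GRing.Theory.
Local Open Scope ring_scope.

Lemma ord2P (k : 'I_2) : k = 0 \/ k = 1.
Proof. by case: k => [[|[|m]] Hk] //; [left | right]; apply: val_inj. Qed.

Lemma lift0_ord2 : lift ord0 ord0 = 1 :> 'I_2.
Proof. exact: val_inj. Qed.

Lemma mulmx2E (R : pzSemiRingType) m p (M : 'M[R]_(m, 2)) (N : 'M[R]_(2, p)) i j :
  (M *m N) i j = M i 0 * N 0 j + M i 1 * N 1 j.
Proof. by rewrite mxE !big_ord_recl big_ord0 addr0 lift0_ord2. Qed.

Lemma det_mx2 (R : comPzRingType) (M : 'M[R]_2) :
  \det M = M 0 0 * M 1 1 - M 0 1 * M 1 0.
Proof.
rewrite (expand_det_row _ 0) !big_ord_recl big_ord0 addr0 /cofactor !det_mx11.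
rewrite !mxE lift0_ord2 /= expr0 expr1.
have -> : lift 1 (0 : 'I_1) = 0 :> 'I_2 by apply: val_inj.
by rewrite mul1r mulN1r mulrN.
Qed.

Definition row2 (R : Type) (a b : R) : 'rV[R]_2 :=
  \row_(k < 2) (if k == 0 then a else b).

Lemma row2_inj (R : Type) (a b c d : R) : row2 a b = row2 c d -> a = c /\ b = d.
Proof.
move=> E; have := congr1 (fun v : 'rV_2 => v 0 0) E.
have := congr1 (fun v : 'rV_2 => v 0 1) E.
by rewrite !mxE.
Qed.

Lemma row2_mul (R : pzSemiRingType) (a b : R) (M : 'M[R]_2) :
  row2 a b *m M = row2 (a * M 0 0 + b * M 1 0) (a * M 0 1 + b * M 1 1).
Proof.
by apply/rowP => k; rewrite mulmx2E !mxE; case: (ord2P k) => ->.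
Qed.

Definition diag2 (R : pzSemiRingType) (a d : R) : 'M[R]_2 := diag_mx (row2 a d).

Lemma diag2E (R : pzSemiRingType) (a d : R) :
  [/\ diag2 a d 0 0 = a, diag2 a d 0 1 = 0, diag2 a d 1 0 = 0 & diag2 a d 1 1 = d].
Proof. by rewrite !mxE. Qed.

Lemma eq0_twisted_commute (R : idomainType) (x c c' : R) : c != c' -> x * c = c' * x -> x = 0.
Proof.
move=> cc' E; apply/eqP.
have : x * (c - c') == 0 by rewrite mulrBr E mulrC subrr.
by rewrite mulf_eq0 subr_eq0 (negbTE cc') orbF.
Qed.

Lemma commute_diag2 (R : idomainType) (a d : R) (M : 'M[R]_2) :
  a != d -> M *m diag2 a d = diag2 a d *m M -> M = diag2 (M 0 0) (M 1 1).
Proof.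
move=> ad E.
have := congr1 (fun N : 'M_2 => N 0 1) E; have := congr1 (fun N : 'M_2 => N 1 0) E.
rewrite /diag2 mul_diag_mx mul_mx_diag !mxE /= => E10 E01.
apply/matrixP => i j; rewrite !mxE.
case: (ord2P i) => ->; case: (ord2P j) => -> //=.
- by apply: eq0_twisted_commute E01; rewrite eq_sym.
- exact: eq0_twisted_commute E10.
Qed.

Lemma diag2_intertwine (F : fieldType) (a d a' d' : F) (A : 'M[F]_2) :
  a != d -> A \in unitmx -> diag2 a d *m A = A *m diag2 a' d' ->
  (A 0 1 = 0 /\ A 1 0 = 0) \/ (A 0 0 = 0 /\ A 1 1 = 0).
Proof.
move=> ad; rewrite unitmxE unitfE det_mx2 => detA E.
have Eij i j := congr1 (fun N : 'M_2 => N i j) E.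
move: (Eij 0 0) (Eij 0 1) (Eij 1 0) (Eij 1 1).
rewrite /diag2 mul_diag_mx mul_mx_diag !mxE /= => E00 E01 E10 E11.
have [A00 | A00] := eqVneq (A 0 0) 0.
  move: detA; rewrite A00 mul0r sub0r oppr_eq0 mulf_eq0 negb_or => /andP[A01 A10].
  have d'a : d' = a by apply: (mulfI A01); rewrite -E01 mulrC.
  have a'd : a' = d by apply: (mulfI A10); rewrite -E10 mulrC.
  by right; split => //; apply: eq0_twisted_commute ad _; rewrite -d'a E11 mulrC.
have a'a : a' = a by apply: (mulfI A00); rewrite -E00 mulrC.
have A10 : A 1 0 = 0 by apply: eq0_twisted_commute ad _; rewrite -a'a -E10 mulrC.
move: detA; rewrite A10 mulr0 subr0 mulf_eq0 negb_or => /andP[_ A11].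
have d'd : d' = d by apply: (mulfI A11); rewrite -E11 mulrC.
left; split => //; apply: eq0_twisted_commute (_ : d != a) _; first by rewrite eq_sym.
by rewrite -d'd -E01 mulrC.
Qed.

Definition sends_graph (R : pzRingType) (g1 g2 : R -> R) (M : 'M[R]_2) : Prop :=
  forall x, g2 (x * M 0 0 + g1 x * M 1 0) = x * M 0 1 + g1 x * M 1 1.

Section SendsGraph.
Variable R : comNzRingType.
Implicit Types (M N : 'M[R]_2).

Lemma row2_sends_graph (g1 g2 : R -> R) M :
  (forall x, exists y, row2 x (g1 x) *m M = row2 y (g2 y)) -> sends_graph g1 g2 M.
Proof.
by move=> gM x; have [y] := gM x; rewrite row2_mul; case/(@row2_inj R) => -> <-.
Qed.

Lemma sends_graph1 (g : R -> R) : sends_graph g g 1.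
Proof. by move=> x; rewrite !mxE /= mulr1 !mulr0 mulr1 addr0 add0r. Qed.

Lemma sends_graph_mul (g1 g2 g3 : R -> R) M N :
  sends_graph g1 g2 M -> sends_graph g2 g3 N -> sends_graph g1 g3 (M *m N).
Proof.
move=> gM gN x; have := gN (x * M 0 0 + g1 x * M 1 0); rewrite gM !mulmx2E.
have -> : x * (M 0 0 * N 0 0 + M 0 1 * N 1 0) + g1 x * (M 1 0 * N 0 0 + M 1 1 * N 1 0)
  = (x * M 0 0 + g1 x * M 1 0) * N 0 0 + (x * M 0 1 + g1 x * M 1 1) * N 1 0 by ring.
by move->; ring.
Qed.

Lemma sends_graphB (g1 g2 : R -> R) M N : zmod_morphism g2 ->
  sends_graph g1 g2 M -> sends_graph g1 g2 N -> sends_graph g1 g2 (M - N).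
Proof.
move=> g2B gM gN x; rewrite !mxE.
have -> : x * (M 0 0 - N 0 0) + g1 x * (M 1 0 - N 1 0) =
  (x * M 0 0 + g1 x * M 1 0) - (x * N 0 0 + g1 x * N 1 0) by ring.
by rewrite g2B gM gN; ring.
Qed.

Lemma sends_graph_diag2 (g1 g2 : R -> R) (a d : R) :
  (forall x, g2 (a * x) = d * g1 x) -> sends_graph g1 g2 (diag2 a d).
Proof.
move=> gad x; have [-> -> -> ->] := diag2E a d.
by rewrite !mulr0 addr0 add0r mulrC gad mulrC.
Qed.

End SendsGraph.

Lemma sends_graph_invmx (L : finFieldType) (g1 g2 : L -> L) (M : 'M[L]_2) :
  M \in unitmx -> sends_graph g1 g2 M -> sends_graph g2 g1 (invmx M).
Proof.
move=> UM gM; apply: row2_sends_graph.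
pose u x := x * M 0 0 + g1 x * M 1 0.
have uM x : row2 x (g1 x) *m M = row2 (u x) (g2 (u x)) by rewrite row2_mul gM.
have u_inj : injective u.
  move=> x y Exy; have : row2 x (g1 x) *m M = row2 y (g1 y) *m M by rewrite !uM Exy.
  by move/(can_inj (mulmxK UM))/(@row2_inj L) => [].
have [v _ uK] := injF_bij u_inj.
by move=> y; exists (v y); rewrite -[y in LHS]uK -uM mulmxK.
Qed.

Lemma GL_equiv_sends_graph (L : finFieldType) (g1 g2 : L -> L) :
  GL_equiv g1 g2 -> exists2 A, A \in unitmx & sends_graph g1 g2 A.
Proof.
case=> A [UA EA]; exists A => //; apply: row2_sends_graph => x.
have : row2 x (g1 x) *m A \in U_set g2 by rewrite -EA; apply: imset_f; apply: imset_f.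
by case/imsetP => y _ ->; exists y.
Qed.

Lemma sends_graph_monomial (F : fieldType) (g1 g2 g1inv : F -> F) (A : 'M[F]_2) :
  cancel g1inv g1 -> A \in unitmx -> sends_graph g1 g2 A ->
  (A 0 1 = 0 /\ A 1 0 = 0) \/ (A 0 0 = 0 /\ A 1 1 = 0) ->
  exists a b, [/\ a != 0, b != 0 &
    (forall x, g2 x = a * g1 (b * x)) \/ (forall x, g2 x = a * g1inv (b * x))].
Proof.
move=> g1invK; rewrite unitmxE unitfE det_mx2 => detA gA [[A01 A10] | [A00 A11]].
  move: detA; rewrite A01 A10 mulr0 subr0 mulf_eq0 negb_or => /andP[A00 A11].
  exists (A 1 1), (A 0 0)^-1; split; rewrite ?invr_eq0 //; left => x.
  have := gA ((A 0 0)^-1 * x); rewrite A10 A01 !mulr0 addr0 add0r.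
  by rewrite mulrAC mulVf ?mul1r // mulrC.
move: detA; rewrite A00 A11 mul0r sub0r oppr_eq0 mulf_eq0 negb_or => /andP[A01 A10].
exists (A 0 1), (A 1 0)^-1; split; rewrite ?invr_eq0 //; right => x.
have := gA (g1inv ((A 1 0)^-1 * x)); rewrite A00 A11 g1invK !mulr0 add0r addr0.
by rewrite mulrAC mulVf ?mul1r // mulrC.
Qed.

Section GraphStabilizer.
Variables (L : finFieldType) (g : L -> L).
Hypothesis gB : zmod_morphism g.

Definition graph_stab : {pred 'M[L]_2} :=
  [pred M : 'M[L]_2 | [forall x, g (x * M 0 0 + g x * M 1 0) == x * M 0 1 + g x * M 1 1]].

Lemma graph_stabP M : reflect (sends_graph g g M) (M \in graph_stab).
Proof. by apply: (iffP forallP) => gM x; apply/eqP. Qed.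

Lemma graph_stab_divring_closed : divring_closed graph_stab.
Proof.
split; first exact/graph_stabP/sends_graph1.
  by move=> M N /graph_stabP gM /graph_stabP gN; apply/graph_stabP/sends_graphB.
move=> M N /graph_stabP gM /graph_stabP gN; apply/graph_stabP/sends_graph_mul => //.
have [UN | nUN] := boolP (N \in unitmx); first exact: sends_graph_invmx.
by rewrite invr_out.
Qed.

HB.instance Definition _ := GRing.isDivringClosed.Build _ graph_stab graph_stab_divring_closed.

Definition graph_stab_ring := {M : 'M[L]_2 | M \in graph_stab}.
HB.instance Definition _ := [isSub of graph_stab_ring for @sval _ _].
HB.instance Definition _ := [Finite of graph_stab_ring by <:].
HB.instance Definition _ := [SubChoice_isSubUnitRing of graph_stab_ring by <:].

Hypothesis graph_stab_unit : forall M, sends_graph g g M -> M != 0 -> M \in unitmx.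

Lemma graph_stab_domain : GRing.integral_domain_axiom graph_stab_ring.
Proof.
move=> M N /(congr1 val) MN0; have [// | nzM] := eqVneq M 0.
apply/eqP/val_inj => /=.
have UM : val M \in unitmx.
  apply: graph_stab_unit; first exact/graph_stabP/valP.
  by apply: contra_neq nzM => M0; apply: val_inj.
have MN0' : val M *m val N = 0 := MN0.
by rewrite -[val N]mul1mx -(mulVmx UM) -mulmxA MN0' mulmx0.
Qed.

Lemma sends_graph_commute M N :
  sends_graph g g M -> sends_graph g g N -> M *m N = N *m M.
Proof.
move=> /graph_stabP gM /graph_stabP gN.
have := finDomain_mulrC graph_stab_domain (Sub M gM : graph_stab_ring) (Sub N gN).
by move/(congr1 val).
Qed.

End GraphStabilizer.

Lemma row2_mul_eq0 (F : fieldType) (x x' y y' : F) (M : 'M[F]_2) :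
  y * x' - x * y' != 0 -> row2 x x' *m M = 0 -> row2 y y' *m M = 0 -> M = 0.
Proof.
move=> xy; rewrite !row2_mul => /rowP Ex /rowP Ey.
move: (Ex 0) (Ex 1) (Ey 0) (Ey 1); rewrite !mxE /= => ex0 ex1 ey0 ey1.
apply/matrixP => i j; apply: (mulfI xy); rewrite mxE mulr0.
case: (ord2P i) => ->; case: (ord2P j) => ->.
- by transitivity (x' * (y * M 0 0 + y' * M 1 0) - y' * (x * M 0 0 + x' * M 1 0));
    [ring | rewrite ex0 ey0; ring].
- by transitivity (x' * (y * M 0 1 + y' * M 1 1) - y' * (x * M 0 1 + x' * M 1 1));
    [ring | rewrite ex1 ey1; ring].
- by transitivity (y * (x * M 0 0 + x' * M 1 0) - x * (y * M 0 0 + y' * M 1 0));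
    [ring | rewrite ex0 ey0; ring].
- by transitivity (y * (x * M 0 1 + x' * M 1 1) - x * (y * M 0 1 + y' * M 1 1));
    [ring | rewrite ex1 ey1; ring].
Qed.

Lemma card_ker_im (V W : finZmodType) (u : V -> W) : zmod_morphism u ->
  (#|V| <= #|[set x | u x == 0%R]| * #|[set u x | x in V]|)%N.
Proof.
move=> uB; pose pre w := odflt 0 [pick x | u x == w].
have preK x : u (pre (u x)) = u x.
  by rewrite /pre; case: pickP => [y /eqP // | /(_ x)]; rewrite eqxx.
have split_inj : injective (fun x => (x - pre (u x), u x)).
  by move=> x y [+ Euxy]; rewrite Euxy => /addIr.
rewrite -cardsT -(card_imset _ split_inj) -cardsX subset_leq_card //.
apply/subsetP => _ /imsetP[x _ ->]; rewrite !inE /= imset_f // andbT.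
by rewrite uB preK subrr.
Qed.

Lemma finField_prim_root (F : finFieldType) : exists w : F, (#|F|.-1).-primitive_root w.
Proof.
pose rs := enum [pred x : F | x != 0].
have size_rs : size rs = #|F|.-1 by rewrite -cardE cardC1.
have F_gt0 : (0 < #|F|.-1)%N by rewrite -ltnS prednK ?finNzRing_gt1 // ltnW ?finNzRing_gt1.
have rs_unity : all #|F|.-1.-unity_root rs.
  apply/allP => x; rewrite mem_enum inE unity_rootE => x0; apply/eqP/(mulIf x0).
  by rewrite mul1r -exprSr prednK ?expf_card // ltnW ?finNzRing_gt1.
have := has_prim_root F_gt0 rs_unity (enum_uniq _) (eq_leq (esym size_rs)).
by case/hasP => w _ w_prim; exists w.
Qed.

Section Scattered.
Variables (L : finFieldType) (q n : nat).
Hypotheses (q_gt1 : (1 < q)%N) (n_gt0 : (0 < n)%N) (cardL : #|L| = (q ^ n)%N).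

Lemma pchar_nat_q : [pchar L].-nat q.
Proof.
have [p p_pr pLp] := finPcharP L.
have /abelem_pgroup := fin_ring_pchar_abelem pLp.
rewrite /pgroup cardsT cardL pnatX -[n == 0%N]negbK -lt0n n_gt0 orbF.
by move/pi_pnat; apply.
Qed.

Lemma exprDn_qpow i (x y : L) : (x + y) ^+ (q ^ i) = x ^+ (q ^ i) + y ^+ (q ^ i).
Proof. by apply: exprDn_pchar; rewrite pnatX pchar_nat_q. Qed.

Lemma qlinB (b : 'I_n -> L) : zmod_morphism (qlin q b).
Proof.
move=> x y; rewrite /qlin -sumrB; apply: eq_bigr => i _.
by rewrite -mulrBr; congr (_ * _); apply/(addIr (y ^+ (q ^ i))); rewrite -exprDn_qpow !subrK.
Qed.

Lemma in_Fq_qpow (c : L) i : in_Fq q c -> c ^+ (q ^ i) = c.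
Proof.
move=> /eqP Fc; elim: i => [|i IH]; first by rewrite expn0 expr1.
by rewrite expnS exprM Fc.
Qed.

Lemma Fq_depP (y z : L) : y != 0 -> Fq_dep q y z -> exists2 e, in_Fq q e & z = e * y.
Proof.
move=> y0 [c [d [Fc Fd cd0 E]]].
have d0 : d != 0.
  apply: contraTneq cd0 => d0; move: E; rewrite d0 mul0r addr0 => /eqP.
  by rewrite mulf_eq0 (negbTE y0) orbF => /eqP ->; rewrite eqxx.
exists (- c / d).
  by rewrite /in_Fq exprMn exprVn (exprNn_pchar _ pchar_nat_q) (eqP Fc) (eqP Fd).
have dz : d * z = - (c * y) by apply/eqP; rewrite -addr_eq0 addrC E.
by apply: (mulfI d0); rewrite dz; field.
Qed.

Lemma card_Fq : (#|[pred c : L | in_Fq q c]| <= q)%N.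
Proof.
pose P : {poly L} := 'X^q - 'X.
have sizeP : size P = q.+1.
  by rewrite size_polyDl size_polyXn // size_polyN size_polyX.
have P0 : P != 0 by rewrite -size_poly_eq0 sizeP.
rewrite cardE -ltnS -sizeP max_poly_roots ?enum_uniq //.
by apply/allP => c; rewrite mem_enum => /eqP Fc; rewrite /root !hornerE Fc subrr.
Qed.

Lemma card_Fq_dep_le (A : {pred L}) :
  {in A &, forall x y, Fq_dep q x y} -> (#|A| <= q)%N.
Proof.
move=> depA; case: (pickP [pred a in A | a != 0]) => [a /andP[Aa a0] | A0].
  have lineA : A \subset [set e * a | e in [pred c | in_Fq q c]].
    apply/subsetP => x Ax.
    by have [e Fe ->] := Fq_depP a0 (depA a x Aa Ax); exact: imset_f.
  exact: leq_trans (subset_leq_card lineA) (leq_trans (leq_imset_card _ _) card_Fq).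
apply: leq_trans (ltnW q_gt1); rewrite -(card1 (0 : L)) subset_leq_card //.
by apply/subsetP => x Ax; have := A0 x; rewrite /= Ax inE => /negbFE.
Qed.

Lemma scattered_Fq_scalar (b : 'I_n -> L) (x k : L) : scattered q b -> x != 0 ->
  qlin q b (k * x) = k * qlin q b x -> in_Fq q k.
Proof.
move=> sb x0 hk; have : Fq_dep q x (k * x) by apply: sb; rewrite hk; ring.
by case/(Fq_depP x0) => e Fe /(mulIf x0) ->.
Qed.

Lemma scattered_stab_unit (b : 'I_n -> L) (M : 'M[L]_2) :
  (2 < n)%N -> scattered q b -> sends_graph (qlin q b) (qlin q b) M -> M != 0 -> M \in unitmx.
Proof.
move=> n_gt2 sb hM nzM; apply/negPn/negP.
rewrite unitmxE unitfE det_mx2 negbK => /eqP detM.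
set h := qlin q b in hM.
have h0 : h 0 = 0 by rewrite /h -{1}(subrr 0) qlinB subrr.
pose u x := x * M 0 0 + h x * M 1 0.
have uB : zmod_morphism u by move=> x y; rewrite /u /h qlinB; ring.
have hu x : h (u x) = x * M 0 1 + h x * M 1 1 := hM x.
have graph_ker x : u x = 0 -> row2 x (h x) *m M = 0.
  move=> ux0; rewrite row2_mul -hu -/(u x) ux0 h0.
  by apply/rowP => k; rewrite !mxE; case: ifP.
have ker_dep : {in [set x | u x == 0] &, forall x y, Fq_dep q x y}.
  move=> x y; rewrite !inE => /eqP ux0 /eqP uy0; apply: sb; apply/eqP/negPn/negP => xy.
  by move/eqP: nzM; apply; apply: (row2_mul_eq0 xy); apply: graph_ker.
have im_dep : {in [set u x | x in L] &, forall x y, Fq_dep q x y}.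
  move=> _ _ /imsetP[x _ ->] /imsetP[y _ ->]; apply: sb; rewrite -/h !hu.
  by transitivity ((y * h x - x * h y) * (M 0 0 * M 1 1 - M 0 1 * M 1 0));
    [rewrite /u; ring | rewrite detM mulr0].
have := leq_mul (card_Fq_dep_le ker_dep) (card_Fq_dep_le im_dep).
move/(leq_trans (card_ker_im uB)).
by rewrite cardL mulnn leq_exp2l // leqNgt n_gt2.
Qed.

Lemma coef_mod_t_of (b : 'I_n -> L) (i j : 'I_n) :
  b i != 0 -> b j != 0 -> i = j %[mod t_of b].
Proof.
move=> bi bj; have [-> // | ij] := eqVneq i j.
set t := t_of b; have t_dvd_n : (t %| n)%N := dvdn_gcdr _ _.
have : (t %| (i + n - j) %% n)%N.
  apply: dvdn_trans (dvdn_gcdl _ n) _; apply: (biggcdn_inf i) => //.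
  by apply: (biggcdn_inf j); rewrite ?ij ?mulf_neq0.
rewrite /dvdn (modn_dvdm _ t_dvd_n) -addnBA ?(ltnW (ltn_ord j)) // => /eqP ij_mod.
apply/eqP; rewrite -(eqn_modDr (n - j)) ij_mod subnKC ?(ltnW (ltn_ord j)) //.
by rewrite eq_sym -/(dvdn t n) t_dvd_n.
Qed.

Lemma expr_qpow_mod (lam : L) t i :
  lam ^+ (q ^ t) = lam -> lam ^+ (q ^ i) = lam ^+ (q ^ (i %% t)).
Proof.
move=> lam_t; rewrite {1}(divn_eq i t) expnD exprM; congr (_ ^+ _).
elim: (i %/ t)%N => [|m IH]; first by rewrite mul0n expn0 expr1.
by rewrite mulSn expnD exprM lam_t IH.
Qed.

Lemma exists_Fqt_notin_Fq t : (1 < t)%N -> (t %| n)%N ->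
  exists lam : L, lam ^+ (q ^ t) = lam /\ lam ^+ q != lam.
Proof.
move=> t_gt1 t_dvd_n; have [w] := finField_prim_root L; rewrite cardL => w_prim.
pose m := (q ^ t).-1.
have q_lt_m : (q < m)%N.
  have : (q * q <= q ^ t)%N by rewrite mulnn leq_exp2l.
  by rewrite /m -subn1; nia.
have m_dvd : (m %| (q ^ n).-1)%N.
  by rewrite -(divnK t_dvd_n) mulnC expnM; apply: dvdn_pred_predX.
have lam_prim := dvdn_prim_root w_prim m_dvd.
set lam := w ^+ _ in lam_prim; exists lam; split.
  rewrite -(@prednK (q ^ t)) ?expn_gt0 ?(ltnW q_gt1) //.
  by rewrite exprS -/m prim_expr_order // mulr1.
rewrite -[X in _ != X]expr1 (eq_prim_root_expr lam_prim) !modn_small //.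
  by rewrite gtn_eqF.
exact: ltn_trans q_gt1 q_lt_m.
Qed.

Lemma standard_form_scaling (b : 'I_n -> L) : scattered q b -> standard_form b ->
  exists lam k, (forall x, qlin q b (lam * x) = lam ^+ (q ^ k) * qlin q b x) /\
                lam ^+ (q ^ k) != lam.
Proof.
move=> sb t_gt1; have [lam [lam_t lam_q]] := exists_Fqt_notin_Fq t_gt1 (dvdn_gcdr _ _).
pose k := if [pick i | b i != 0] is Some i then val i else 0%N.
have coef_k i : b i != 0 -> i = k %[mod t_of b].
  by rewrite /k; case: pickP => [j bj bi | /(_ i) /= ->]; first exact: coef_mod_t_of.
have scale x : qlin q b (lam * x) = lam ^+ (q ^ k) * qlin q b x.
  rewrite /qlin mulr_sumr; apply: eq_bigr => i _.
  have [-> | bi] := eqVneq (b i) 0; first by rewrite !mul0r mulr0.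
  rewrite exprMn [in RHS](expr_qpow_mod _ lam_t) -(coef_k i bi).
  by rewrite -(expr_qpow_mod _ lam_t) mulrCA.
exists lam, k; split => //; apply: contra lam_q => /eqP lam_k.
by apply: (scattered_Fq_scalar sb (oner_neq0 L)); rewrite scale lam_k.
Qed.

Lemma standard_form_injective (b : 'I_n -> L) :
  scattered q b -> standard_form b -> injective (qlin q b).
Proof.
move=> sb st; have [lam [k [scale lam_k]]] := standard_form_scaling sb st.
suff ker0 x : qlin q b x = 0 -> x = 0.
  by move=> x y /eqP; rewrite -subr_eq0 -qlinB => /eqP/ker0/eqP; rewrite subr_eq0 => /eqP.
move=> hx0; apply/eqP/negP => /negP x0; move/negP: lam_k; apply; apply/eqP/in_Fq_qpow.
by apply: (scattered_Fq_scalar sb x0); rewrite scale hx0 !mulr0.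
Qed.

Lemma sends_graph_standard_form_monomial (bh bh' : 'I_n -> L) (A : 'M[L]_2) :
  (2 < n)%N -> scattered q bh -> scattered q bh' ->
  standard_form bh -> standard_form bh' ->
  A \in unitmx -> sends_graph (qlin q bh) (qlin q bh') A ->
  (A 0 1 = 0 /\ A 1 0 = 0) \/ (A 0 0 = 0 /\ A 1 1 = 0).
Proof.
move=> n_gt2 sh sh' st st' UA hA.
have [lam [k [scale lam_k]]] := standard_form_scaling sh st.
have [mu [k' [scale' mu_k']]] := standard_form_scaling sh' st'.
pose X := invmx A *m diag2 lam (lam ^+ (q ^ k)) *m A.
have h'X : sends_graph (qlin q bh') (qlin q bh') X.
  apply: (sends_graph_mul _ hA); apply: sends_graph_mul (sends_graph_invmx UA hA) _.
  exact: sends_graph_diag2 scale.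
have X_diag : X = diag2 (X 0 0) (X 1 1).
  have mu_ne : mu != mu ^+ (q ^ k') by rewrite eq_sym mu_k'.
  have stab_unit M := @scattered_stab_unit bh' M n_gt2 sh'.
  have XD := sends_graph_commute (qlinB bh') stab_unit h'X (sends_graph_diag2 scale').
  exact: commute_diag2 mu_ne XD.
have lam_ne : lam != lam ^+ (q ^ k) by rewrite eq_sym lam_k.
have DA : diag2 lam (lam ^+ (q ^ k)) *m A = A *m diag2 (X 0 0) (X 1 1).
  by rewrite -X_diag /X !mulmxA mulmxV // mul1mx.
exact: diag2_intertwine lam_ne UA DA.
Qed.

End Scattered.

Lemma qlinK (L : finFieldType) q n (b : 'I_n -> L) :
  injective (qlin q b) -> cancel (qinv q b) (qlin q b).
Proof.
move=> /injF_bij[f _ fK] y; rewrite /qinv; case: pickP => [x /eqP // | /(_ (f y))].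
by rewrite fK eqxx.
Qed.

Lemma standard_form_n2_monomial (L : finFieldType) q (b : 'I_2 -> L) :
  (1 < q)%N -> #|L| = (q ^ 2)%N -> scattered q b -> standard_form b ->
  exists2 c, c != 0 & forall x, qlin q b x = c * x ^+ q.
Proof.
move=> q_gt1 cardL sb st.
have qlinE x : qlin q b x = b 0 * x + b 1 * x ^+ q.
  by rewrite /qlin !big_ord_recl big_ord0 addr0 lift0_ord2 expn0 expr1 expn1.
have [lam [k [_ lam_k]]] := standard_form_scaling q_gt1 (isT : (0 < 2)%N) cardL sb st.
have b1 : b 1 != 0.
  apply: contra lam_k => /eqP b1; apply/eqP/in_Fq_qpow.
  apply: (scattered_Fq_scalar (isT : (0 < 2)%N) cardL sb (oner_neq0 L)).
  by rewrite !qlinE b1 !mul0r !addr0 mulrCA.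
exists (b 1) => // x; rewrite qlinE.
suff -> : b 0 = 0 by rewrite mul0r add0r.
have t2 : t_of b = 2%N.
  have : (t_of b <= 2)%N by apply: dvdn_leq; last exact: dvdn_gcdr.
  by move: st; rewrite /standard_form; lia.
by apply/eqP/negP => /negP b0; have := coef_mod_t_of b0 b1; rewrite t2.
Qed.

Theorem proposition4p8 (L : finFieldType) (q n : nat)
  (hq : (1 < q)%N) (hn : (1 < n)%N) (hL : #|L| = (q ^ n)%N)
  (bf bh bh' : 'I_n -> L) :
  scattered q bf -> scattered q bh -> scattered q bh' ->
  standard_form bh -> standard_form bh' ->
  GL_equiv (qlin q bh) (qlin q bf) -> GL_equiv (qlin q bh') (qlin q bf) ->
  exists a b : L, [/\ a != 0, b != 0 &
    (forall x, qlin q bh' x = a * qlin q bh (b * x)) \/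
    (forall x, qlin q bh' x = a * qinv q bh (b * x))].
Proof.
move=> _ sh sh' st st' Ghf Gh'f.
have [n_le2 | n_gt2] := leqP n 2.
  have n2 : n = 2%N by lia.
  subst n; have [c c0 hc] := standard_form_n2_monomial hq hL sh st.
  have [c' c'0 hc'] := standard_form_n2_monomial hq hL sh' st'.
  exists (c' / c), 1; split; rewrite ?oner_neq0 ?mulf_neq0 ?invr_eq0 //.
  by left => x; rewrite hc hc' mul1r; field.
have [A1 UA1 hA1] := GL_equiv_sends_graph Ghf.
have [A2 UA2 h'A2] := GL_equiv_sends_graph Gh'f.
have UA : A1 *m invmx A2 \in unitmx by rewrite unitmx_mul UA1 unitmx_inv.
have hA := sends_graph_mul hA1 (sends_graph_invmx UA2 h'A2).
apply: (sends_graph_monomial _ UA hA).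
  exact/qlinK/(standard_form_injective hq (ltnW hn) hL sh st).
exact (sends_graph_standard_form_monomial hq (ltnW hn) hL n_gt2 sh sh' st st' UA hA).
Qed.
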